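(* Let $P$ be a finite poset with height function $h$ and let $D\ge1$ be an integer. Then $$\mathsf{Z}_{P,Dh}(x)=\mathsf{Z}_{P,h}\big|_{q=q^D}\!\left(\frac{(1+(q-1)x)^D-1}{q^D-1}\right),$$ where $\mathsf{Z}_{P,h}|_{q=q^D}$ denotes the polynomial obtained from $\mathsf{Z}_{P,h}$ by replacing $q$ by $q^D$ in its coefficients.
   Context: $q$ is an indeterminate; $[n]_q=(q^n-1)/(q-1)$. A height function on a finite poset $P$ is $h:P\to\mathbb{N}$ with $h(x)<h(y)$ whenever $y$ covers $x$ (so $Dh$ is again one). The $q$-Zeta polynomial $\mathsf{Z}_{P,h}\in\mathbb{Q}(q)[x]$ is the unique polynomial with $\mathsf{Z}_{P,h}([n]_q)=\sum_{e_1\le\cdots\le e_{n-1}\text{ in }P}q^{h(e_1)+\cdots+h(e_{n-1})}$ for all integers $n\ge2$ (such a polynomial exists). *)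

From HB Require Import structures.
From mathcomp Require Import all_boot all_order all_algebra.
From mathcomp Require Import generic_quotient fraction.
From Stdlib Require Import ClassicalEpsilon.
Set Implicit Arguments. Unset Strict Implicit. Unset Printing Implicit Defensive.
Import Order.TTheory GRing.Theory.
Local Open Scope ring_scope.

Definition Qq : fieldType := {fraction {poly rat}}.

Definition qv : Qq := tofrac ('X : {poly rat}).

Definition qint (n : nat) : Qq := (qv ^+ n - 1) / (qv - 1).

Definition covers (d : Order.disp_t) (P : finPOrderType d) (x y : P) : Prop :=
  (x < y)%O /\ ~ (exists z : P, (x < z)%O /\ (z < y)%O).

Definition is_height (d : Order.disp_t) (P : finPOrderType d) (h : P -> nat) : Prop :=
  forall x y : P, covers x y -> (h x < h y)%N.

Definition multichain_sum (d : Order.disp_t) (P : finPOrderType d) (h : P -> nat)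
  (k : nat) : Qq :=
  \sum_(t : k.-tuple P | sorted (<=%O) (tval t)) qv ^+ (\sum_(e <- tval t) h e)%N.

Definition is_qZeta (d : Order.disp_t) (P : finPOrderType d) (h : P -> nat)
  (Z : {poly Qq}) : Prop :=
  forall n : nat, (2 <= n)%N -> Z.[qint n] = multichain_sum h n.-1.

Definition qZeta (d : Order.disp_t) (P : finPOrderType d) (h : P -> nat) : {poly Qq} :=
  epsilon (inhabits 0) (is_qZeta h).

Definition subst_qpow (D : nat) (f : Qq) : Qq :=
  let r := repr f in
  tofrac ((\n_r) \Po 'X^D) / tofrac ((\d_r) \Po 'X^D).

Definition qpow_arg (D : nat) : {poly Qq} :=
  ((1 + (qv - 1)%:P * 'X) ^+ D - 1) * ((qv ^+ D - 1)^-1)%:P.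

(** The substitution q := q^D is the field endomorphism of Q(q) extending the
    injective ring map p |-> p(X^D) of Q[q].  It sends [n]_q to
    [n]_(q^D) = ((1 + (q - 1)[n]_q)^D - 1)/(q^D - 1) and the multichain sums of
    (P, h) to those of (P, D h), so the right-hand side has the defining property
    of Z_(P,Dh); a polynomial is determined by its values at the pairwise distinct
    [n]_q.

    As the q-Zeta polynomial is chosen by Hilbert's epsilon, its existence must be
    shown as well.  Let U_x(k) sum over the multichains of length k above x.
    Splitting off the first element gives
    U_x(k+1) = q^(h x) U_x(k) + sum_(y > x) q^(h y) U_y(k), and since h strictly
    increases along x < y, descending induction shows
    U_x(k) = sum_i c_i q^(a_i k) with all a_i >= h x: the particular solution only
    divides by q^a - q^(h x) with a > h x.  Finally q^k = rho([k+2]_q) for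
    rho(x) = (1 + (q - 1) x)/q^2, so sum_i c_i rho^(a_i) interpolates. *)

From HB Require Import structures.
From mathcomp Require Import all_boot all_order all_algebra.
From mathcomp Require Import generic_quotient fraction ring.
From Stdlib Require Import ClassicalEpsilon.
Set Implicit Arguments. Unset Strict Implicit. Unset Printing Implicit Defensive.
Import Order.TTheory GRing.Theory.
Local Open Scope ring_scope.

Lemma tofrac_numden (R : idomainType) (x : {fraction R}) :
  x = tofrac \n_(repr x) / tofrac \d_(repr x).
Proof.
have d_neq0 : tofrac \d_(repr x) != 0 by rewrite tofrac_eq0 denom_ratioP.
apply: (canRL (mulfK d_neq0)).
rewrite -{1}[x]reprK; move: (repr x) => r; unlock tofrac; rewrite !piE.
apply/eqmodP; rewrite /= FracField.equivfE /FracField.mulf.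
by rewrite !numden_Ratio ?mulf_neq0 ?oner_eq0 ?denom_ratioP // !mulr1 mulrC.
Qed.

Lemma tofrac_divP (R : idomainType) (x : {fraction R}) :
  exists a, exists2 b, b != 0 & x = tofrac a / tofrac b.
Proof. by exists \n_(repr x), \d_(repr x); [apply: denom_ratioP | apply: tofrac_numden]. Qed.

Lemma tofrac_div_eq (R : idomainType) (a b c e : R) : b != 0 -> e != 0 ->
  (tofrac a / tofrac b == tofrac c / tofrac e) = (a * e == c * b).
Proof. by move=> b_neq0 e_neq0; rewrite eqr_div ?tofrac_eq0 // -!tofracM tofrac_eq. Qed.

Section FracLift.
Variables (R : idomainType) (K : fieldType) (f : {rmorphism R -> K}).
Hypothesis f_inj : injective f.

Definition frac_lift (x : {fraction R}) : K := f \n_(repr x) / f \d_(repr x).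

Let f_neq0 a : a != 0 -> f a != 0.
Proof. by apply: contra => /eqP fa0; apply/eqP/f_inj; rewrite fa0 rmorph0. Qed.

Lemma frac_lift_div a b : b != 0 -> frac_lift (tofrac a / tofrac b) = f a / f b.
Proof.
move=> b_neq0; rewrite /frac_lift; set x := tofrac a / _.
have d_neq0 := denom_ratioP (repr x).
have /eqP := tofrac_numden x; rewrite {1}/x tofrac_div_eq // => /eqP/(congr1 f).
rewrite !rmorphM => cross.
by apply/eqP; rewrite eqr_div ?f_neq0 // cross.
Qed.

Lemma frac_lift_is_zmod_morphism : zmod_morphism frac_lift.
Proof.
move=> x y; have [a [b b_neq0 ->]] := tofrac_divP x.
have [c [e e_neq0 ->]] := tofrac_divP y.
have fb_neq0 := f_neq0 b_neq0; have fe_neq0 := f_neq0 e_neq0.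
have be_neq0 : b * e != 0 by rewrite mulf_neq0.
have -> : tofrac a / tofrac b - tofrac c / tofrac e
          = tofrac (a * e - c * b) / tofrac (b * e).
  by rewrite -mulNr addf_div ?tofrac_eq0 // mulNr tofracB !tofracM.
rewrite !frac_lift_div // rmorphB !rmorphM.
by rewrite -[in RHS]mulNr addf_div // mulNr.
Qed.

Lemma frac_lift_is_monoid_morphism : monoid_morphism frac_lift.
Proof.
split=> [|x y].
  by rewrite -[1]divr1 -tofrac1 frac_lift_div ?oner_eq0 // rmorph1 divr1.
have [a [b b_neq0 ->]] := tofrac_divP x.
have [c [e e_neq0 ->]] := tofrac_divP y.
have be_neq0 : b * e != 0 by rewrite mulf_neq0.
by rewrite mulf_div -!tofracM !frac_lift_div // !rmorphM mulf_div.
Qed.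

End FracLift.

Section SubstQpow.
Variable D : nat.

Let qpow_map : {rmorphism {poly rat} -> Qq} := @tofrac _ \o comp_poly 'X^(D.+1).

Let qpow_map_inj : injective qpow_map.
Proof.
move=> p r /eqP; rewrite /qpow_map /= tofrac_eq -subr_eq0 -rmorphB /=.
by rewrite comp_poly_eq0 ?size_polyXn // subr_eq0 => /eqP.
Qed.

HB.instance Definition _ := GRing.isZmodMorphism.Build Qq Qq (subst_qpow D.+1)
  (frac_lift_is_zmod_morphism qpow_map_inj).
HB.instance Definition _ := GRing.isMonoidMorphism.Build Qq Qq (subst_qpow D.+1)
  (frac_lift_is_monoid_morphism qpow_map_inj).

Lemma subst_qpow_qv : subst_qpow D.+1 qv = qv ^+ D.+1.
Proof.
rewrite /qv -[tofrac _]divr1 -tofrac1.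
rewrite [LHS](frac_lift_div qpow_map_inj) ?oner_eq0 //=.
by rewrite comp_polyX rmorph1 !tofrac1 !divr1 tofracXn.
Qed.

Lemma subst_qpow_qvX n : subst_qpow D.+1 (qv ^+ n) = qv ^+ (D.+1 * n).
Proof. by rewrite rmorphXn /= subst_qpow_qv -exprM. Qed.

End SubstQpow.

Lemma subst_qpow_multichain_sum D (d : Order.disp_t) (P : finPOrderType d) (h : P -> nat) k :
  subst_qpow D.+1 (multichain_sum h k) = multichain_sum (fun x => (D.+1 * h x)%N) k.
Proof.
rewrite /multichain_sum rmorph_sum; apply: eq_bigr => t _.
by rewrite -big_distrr; apply: subst_qpow_qvX.
Qed.

Lemma qv_expI : injective (fun n : nat => qv ^+ n).
Proof.
move=> m n /eqP; rewrite /qv -!tofracXn tofrac_eq => /eqP.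
by move=> /(congr1 (size : {poly rat} -> nat)); rewrite !size_polyXn => -[].
Qed.

Lemma qv_sub1_neq0 : qv - 1 != 0.
Proof. by rewrite subr_eq0 -[qv]expr1 -(expr0 qv); apply/eqP => /qv_expI. Qed.

Lemma qvX_qint n : qv ^+ n = 1 + (qv - 1) * qint n.
Proof. by rewrite /qint mulrC divfK ?qv_sub1_neq0 // addrC subrK. Qed.

Lemma qint_inj : injective qint.
Proof. by move=> m n qint_mn; apply: qv_expI; rewrite /= !qvX_qint qint_mn. Qed.

Lemma poly_eq_on_qint (p r : {poly Qq}) :
  (forall n, (2 <= n)%N -> p.[qint n] = r.[qint n]) -> p = r.
Proof.
move=> pr; apply/eqP; rewrite -subr_eq0; apply/eqP.
apply: (@roots_geq_poly_eq0 _ _ [seq qint i.+2 | i <- iota 0 (size (p - r))]).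
- by apply/allP => _ /mapP [i _ ->]; rewrite rootE hornerD hornerN pr // subrr.
- by rewrite map_inj_uniq ?iota_uniq // => i j /qint_inj [].
- by rewrite size_map size_iota.
Qed.

Lemma qpow_arg_qint D n : (qpow_arg D.+1).[qint n] = subst_qpow D.+1 (qint n).
Proof.
rewrite /qpow_arg (@hornerM Qq) !hornerC hornerD hornerN hornerC (@horner_exp Qq) hornerD.
rewrite (@hornerCM Qq) hornerX hornerC -qvX_qint -exprM mulnC.
by rewrite /qint fmorph_div !rmorphB /= subst_qpow_qvX subst_qpow_qv rmorph1.
Qed.

Section QExpSums.
Variables (F : fieldType) (q : F).

Definition qexp_sum (s : seq (F * nat)) (k : nat) : F :=
  \sum_(c <- s) c.1 * q ^+ (c.2 * k).

Definition is_qexp (A : pred nat) (u : nat -> F) : Prop :=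
  exists2 s : seq (F * nat), all (fun c => A c.2) s & u =1 qexp_sum s.

Lemma eq_is_qexp A u v : u =1 v -> is_qexp A u -> is_qexp A v.
Proof. by move=> uv [s sA us]; exists s => // k; rewrite -uv. Qed.

Lemma is_qexp_sub (A B : pred nat) u : {subset A <= B} -> is_qexp A u -> is_qexp B u.
Proof. by move=> AB [s sA us]; exists s => //; apply/allP => c /(allP sA) /AB. Qed.

Lemma is_qexpD A u v : is_qexp A u -> is_qexp A v -> is_qexp A (fun k => u k + v k).
Proof.
move=> [s sA us] [t tA vt]; exists (s ++ t); first by rewrite all_cat sA.
by move=> k; rewrite /qexp_sum big_cat us vt.
Qed.

Lemma is_qexpZ A a u : is_qexp A u -> is_qexp A (fun k => a * u k).
Proof.
move=> [s sA us]; exists [seq (a * c.1, c.2) | c <- s]; first by rewrite all_map.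
by move=> k; rewrite /qexp_sum big_map us mulr_sumr; apply: eq_bigr => c _; rewrite mulrA.
Qed.

Lemma is_qexp_sum A (I : Type) (r : seq I) (Pr : pred I) (u : I -> nat -> F) :
  (forall i, Pr i -> is_qexp A (u i)) ->
  is_qexp A (fun k => \sum_(i <- r | Pr i) u i k).
Proof.
move=> uA; elim: r => [|i r IH].
  by exists [::] => // k; rewrite /qexp_sum !big_nil.
case Pi: (Pr i).
  by apply: (eq_is_qexp _ (is_qexpD (uA i Pi) IH)) => k; rewrite big_cons Pi.
by apply: (eq_is_qexp _ IH) => k; rewrite big_cons Pi.
Qed.

Lemma is_qexp_recursion (b : nat) (u g : nat -> F) :
  injective (fun n : nat => q ^+ n) ->
  is_qexp (fun a => b < a)%N g -> (forall k, u k.+1 = q ^+ b * u k + g k) ->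
  is_qexp (fun a => b <= a)%N u.
Proof.
move=> q_expI [s sA gs] u_rec.
have qb_neq c : c \in s -> q ^+ c.2 - q ^+ b != 0.
  move=> /(allP sA) /= b_lt_c; rewrite subr_eq0; apply/eqP => /q_expI c_eq_b.
  by rewrite c_eq_b ltnn in b_lt_c.
pose s' := [seq (c.1 / (q ^+ c.2 - q ^+ b), c.2) | c <- s].
have s'_rec k : qexp_sum s' k.+1 = q ^+ b * qexp_sum s' k + g k.
  rewrite gs /qexp_sum !big_map mulr_sumr -big_split /=.
  apply: eq_big_seq => c /qb_neq qcb_neq0; rewrite mulnS exprD.
  by field.
have u_eq k : u k = (u 0 - qexp_sum s' 0) * q ^+ (b * k) + qexp_sum s' k.
  elim: k => [|k IH]; first by rewrite muln0 expr0 mulr1 subrK.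
  by rewrite u_rec s'_rec IH mulnS exprD; ring.
exists ((u 0 - qexp_sum s' 0, b) :: s') => [|k]; last by rewrite /qexp_sum big_cons -u_eq.
by rewrite /= leqnn all_map; apply/allP => c /(allP sA) /ltnW.
Qed.

End QExpSums.

Lemma qexp_interpolation (u : nat -> Qq) : is_qexp qv predT (fun k => u k.+1) ->
  exists Z : {poly Qq}, forall n, (2 <= n)%N -> Z.[qint n] = u n.-1.
Proof.
move=> [s _ us].
pose rho : {poly Qq} := (qv ^+ 2)^-1 *: (1 + (qv - 1) *: 'X).
have qv_neq0 : qv != 0 by rewrite tofrac_eq0 polyX_eq0.
have rho_qint k : rho.[qint k.+2] = qv ^+ k.
  rewrite hornerZ hornerD hornerC hornerZ hornerX -qvX_qint -[k.+2]add2n exprD.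
  by rewrite mulKf ?expf_neq0.
exists (\sum_(c <- s) c.1 *: rho ^+ c.2) => -[|[|k]] // _.
rewrite horner_sum us /qexp_sum; apply: eq_bigr => c _.
by rewrite hornerZ horner_exp rho_qint -exprM mulnC.
Qed.

Lemma big_tuple_cons (T : finType) (V : nmodType) k (F : seq T -> V) :
  \sum_(t : k.+1.-tuple T) F t = \sum_(x : T) \sum_(t : k.-tuple T) F (x :: t).
Proof.
rewrite pair_big /= (reindex (fun p : T * k.-tuple T => [tuple of p.1 :: p.2])) //=.
exists (fun t : k.+1.-tuple T => (thead t, [tuple of behead t])) => [[x t] _ | t _].
  by congr (_, _); apply: val_inj.
by rewrite /= -tuple_eta.
Qed.

Section Multichains.
Variables (d : Order.disp_t) (P : finPOrderType d) (h : P -> nat).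

Lemma height_homo_lt : is_height h -> {homo h : x y / (x < y)%O >-> (x < y)%N}.
Proof.
move=> h_height x y; have [n] := ubnP #|[pred z | (x < z < y)%O]|.
elim: n x y => // n IH x y; rewrite ltnS => interval_le x_lt_y.
case: (pickP [pred z | (x < z < y)%O]) => [z /andP [x_lt_z z_lt_y] | no_between].
  have shrink (a b : P) : (x <= a)%O -> (b <= y)%O -> ~~ (a < z < b)%O ->
      (#|[pred w | (a < w < b)%O]| < n)%N.
    move=> x_le_a b_le_y z_out; apply: leq_trans interval_le.
    apply: proper_card; apply/properP; split.
      apply/subsetP => w; rewrite !inE => /andP [a_lt_w w_lt_b].
      by rewrite (le_lt_trans x_le_a a_lt_w) (lt_le_trans w_lt_b b_le_y).
    by exists z; rewrite !inE ?x_lt_z.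
  have h_xz := IH x z (shrink x z (lexx x) (ltW z_lt_y) _) x_lt_z.
  have h_zy := IH z y (shrink z y (ltW x_lt_z) (lexx y) _) z_lt_y.
  by apply: ltn_trans (h_xz _) (h_zy _); rewrite ltxx ?andbF.
apply: h_height; split=> // -[z [x_lt_z z_lt_y]].
by have := no_between z; rewrite /= x_lt_z z_lt_y.
Qed.

Definition qweight (t : seq P) : Qq := qv ^+ (\sum_(e <- t) h e).

Definition multichain_sum_from (x : P) (k : nat) : Qq :=
  \sum_(t : k.-tuple P | path <=%O x t) qweight t.

Lemma sum_qweight_cons (y : P) k :
  \sum_(t : k.-tuple P) (if path <=%O y t then qweight (y :: t) else 0)
  = qv ^+ h y * multichain_sum_from y k.
Proof.
rewrite /multichain_sum_from mulr_sumr [RHS]big_mkcond; apply: eq_bigr => t _.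
by case: ifP; rewrite ?mulr0 // /qweight big_cons exprD.
Qed.

Lemma multichain_sum_rec k :
  multichain_sum h k.+1 = \sum_(y : P) qv ^+ h y * multichain_sum_from y k.
Proof.
rewrite /multichain_sum big_mkcond.
rewrite (big_tuple_cons _ (fun t => if sorted <=%O t then qweight t else 0)).
by apply: eq_bigr => y _; apply: sum_qweight_cons.
Qed.

Lemma multichain_sum_from_rec x k :
  multichain_sum_from x k.+1 = qv ^+ h x * multichain_sum_from x k
                               + \sum_(y | (x < y)%O) qv ^+ h y * multichain_sum_from y k.
Proof.
have -> : multichain_sum_from x k.+1
          = \sum_(y | (x <= y)%O) qv ^+ h y * multichain_sum_from y k.
  rewrite {1}/multichain_sum_from big_mkcond [RHS]big_mkcond.
  rewrite (big_tuple_cons _ (fun t => if path <=%O x t then qweight t else 0)).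
  apply: eq_bigr => y _ /=; case: (x <= y)%O; first exact: sum_qweight_cons.
  by rewrite big1.
by rewrite (bigD1 x) //=; congr (_ + _); apply: eq_bigl => y; rewrite lt_def andbC.
Qed.

Hypothesis h_height : is_height h.

Lemma is_qexp_multichain_sum_from x :
  is_qexp qv (fun a => h x <= a)%N (multichain_sum_from x).
Proof.
have [n] := ubnP #|[pred y | (x < y)%O]|; elim: n x => // n IH x.
rewrite ltnS => above_x_le.
apply: (is_qexp_recursion qv_expI _ (multichain_sum_from_rec x)).
apply: is_qexp_sum => y x_lt_y; apply: is_qexpZ.
apply: (is_qexp_sub _ (IH y _)) => [a /= | ].
  exact: leq_trans (height_homo_lt h_height x_lt_y).
apply: leq_trans above_x_le; apply: proper_card; apply/properP; split.
  by apply/subsetP => z; rewrite !inE; apply: lt_trans.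
by exists y; rewrite !inE ?x_lt_y // ltxx.
Qed.

Lemma qZeta_exists : exists Z, is_qZeta h Z.
Proof.
apply: qexp_interpolation.
apply: (eq_is_qexp (fun k => esym (multichain_sum_rec k))).
apply: is_qexp_sum => y _; apply: is_qexpZ.
exact: is_qexp_sub (is_qexp_multichain_sum_from y).
Qed.

End Multichains.

Lemma qZeta_eq d (P : finPOrderType d) (h : P -> nat) (Z : {poly Qq}) :
  is_qZeta h Z -> qZeta h = Z.
Proof.
move=> hZ; have hq := epsilon_spec (inhabits 0) _ (ex_intro _ Z hZ).
by apply: poly_eq_on_qint => n n_ge2; rewrite hq // hZ.
Qed.

Lemma qZetaP d (P : finPOrderType d) (h : P -> nat) :
  is_height h -> is_qZeta h (qZeta h).
Proof. by move=> /qZeta_exists [Z hZ]; rewrite (qZeta_eq hZ). Qed.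

Theorem mainTheorem17 (d : Order.disp_t) (P : finPOrderType d) (h : P -> nat)
  (D : nat) :
  is_height h -> (1 <= D)%N ->
  qZeta (fun x => (D * h x)%N) = (map_poly (subst_qpow D) (qZeta h)) \Po qpow_arg D.
Proof.
move=> h_height; case: D => // D _.
apply: qZeta_eq => n n_ge2.
rewrite horner_comp qpow_arg_qint horner_map /= (qZetaP h_height n_ge2).
exact: subst_qpow_multichain_sum.
Qed.
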